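(* Let $a>0$, $b\in\mathbb{R}$, $C>0$ with $b=2a'C^2$ (where $a'\in\mathbb{R}$), and $\omega=a^2/4$. Let $\alpha=a+b/2$, $\beta=b/2$, let $k_\pm(\lambda)=\sqrt{-\omega\mp i\lambda}$ be the branches analytic on $\mathbb{C}\setminus\mathcal{C}_\pm$ with $\operatorname{Im}k_\pm(\lambda)>0$ there, where $\mathcal{C}_+=[i\omega,i\infty)$, $\mathcal{C}_-=(-i\infty,-i\omega]$, and let $$ D(\lambda)=\alpha^2+2i\alpha(k_++k_-)-4k_+k_--\beta^2,\qquad \lambda\in\mathbb{C}\setminus(\mathcal{C}_+\cup\mathcal{C}_-). $$ If $a'=a/C^2$ then $\lambda=0$ is a zero of $D$ of multiplicity $4$; otherwise $\lambda=0$ is a zero of $D$ of multiplicity $2$.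
   Context: $D(\lambda)$ is the determinant whose zeros give the poles of the resolvent of the linearization $\mathbf C$ at the solitary wave $Ce^{-\sqrt\omega|x|}$, with $a=a(C^2)$, $a'=a'(C^2)$. *)

From mathcomp Require Import all_boot all_order all_algebra.
From mathcomp Require Import all_classical all_reals all_analysis.
From mathcomp Require Export complex.
Export Order.TTheory GRing.Theory Num.Theory numFieldNormedType.Exports.

Set Implicit Arguments.
Unset Strict Implicit.
Unset Printing Implicit Defensive.

Local Open Scope ring_scope.
Local Open Scope complex_scope.

(* The square-root branch with positive imaginary part:
   for z = x + i y not in [0, +oo), csqrt_up z is the unique w with
   w^2 = z and Im w > 0 (branch cut along [0,+oo)).
   Explicitly w = (sgn y) sqrt((|z|+x)/2) + i sqrt((|z|-x)/2). *)
Definition csqrt_up (R : realType) (z : R[i]) : R[i] :=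
  let x : R := complex.Re z in
  let y : R := complex.Im z in
  let m := Num.sqrt (x ^+ 2 + y ^+ 2) in
  let s := Num.sqrt ((m + x) / 2) in
  let t := Num.sqrt ((m - x) / 2) in
  (if 0 <= y then s else - s) +i* t.

Definition kplus (R : realType) (omega : R) (lam : R[i]) : R[i] :=
  csqrt_up (- (omega%:C) - 'i * lam).

Definition kminus (R : realType) (omega : R) (lam : R[i]) : R[i] :=
  csqrt_up (- (omega%:C) + 'i * lam).

Definition Dfun (R : realType) (a b : R) (lam : R[i]^o) : R[i]^o :=
  let alpha : R[i] := (a + b / 2)%:C in
  let beta : R[i] := (b / 2)%:C in
  let omega : R := a ^+ 2 / 4 in
  let kp := kplus omega lam in
  let km := kminus omega lam in
  alpha ^+ 2 + 2%:R * 'i * alpha * (kp + km) - 4%:R * kp * km - beta ^+ 2.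

Definition zero_of_multiplicity (R : realType) (f : R[i]^o -> R[i]^o)
    (z0 : R[i]^o) (n : nat) : Prop :=
  (\forall z \near z0, derivable f z 1) /\
  (forall k : nat, (k < n)%N -> derive1n k f z0 = 0) /\
  derive1n n f z0 != 0.

(* Near lambda = 0 both k_+ and k_- stay off their cuts, and differentiating
   k_+^2 = -omega - i lambda, k_-^2 = -omega + i lambda gives
   k_+' = -i / (2 k_+), k_-' = i / (2 k_-).  Normalised by their common value
   k0 = i a / 2 at 0, X = k_+ / k0 and Y = k_- / k0 satisfy X' = kappa / X and
   Y' = - kappa / Y with kappa = -i / (2 k0^2), and
   D = a (a + 2 beta) - a (a + beta) (X + Y) + a^2 X Y.
   Hence every derivative of D is a Laurent polynomial in X and Y, obtained by
   iterating the derivation determined by these two rules, and since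
   X(0) = Y(0) = 1, D^(k)(0) is its coefficient sum.  This yields
   D(0) = D'(0) = D'''(0) = 0, D''(0) = 2 a (beta - a) kappa^2 and
   D''''(0) = 6 a (5 beta - 3 a) kappa^4, while beta = a' C^2 equals a exactly
   when a' = a / C^2. *)

From mathcomp Require Import all_boot all_order all_algebra.
From mathcomp Require Import all_classical all_reals all_analysis.
From mathcomp Require Import complex.
From mathcomp Require Import ring lra.

Set Implicit Arguments.
Unset Strict Implicit.
Unset Printing Implicit Defensive.

Local Open Scope ring_scope.
Local Open Scope complex_scope.
Local Open Scope classical_set_scope.

Section SquareRootBranch.
Variable K : numFieldType.
Variables (g h : K -> K) (z0 : K) (c : K).
Hypotheses (c_gt0 : 0 < c) (g_sqr : forall z, g z ^+ 2 = h z)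
  (g_sep : forall z, c <= `|g z + g z0|).

Let gD_neq0 z : g z + g z0 != 0.
Proof. by rewrite -normr_gt0 (lt_le_trans c_gt0). Qed.

Let g_sub z : g z - g z0 = (h z - h z0) / (g z + g z0).
Proof. by rewrite -!g_sqr subr_sqr mulfK. Qed.

Lemma sqrt_branch_continuous : {for z0, continuous h} -> {for z0, continuous g}.
Proof.
move=> hc; apply/(@cvgrPdist_lt _ _ _ (nbhs z0) (nbhs_filter z0)) => e e_gt0.
have := (@cvgrPdist_lt _ _ _ (nbhs z0) (nbhs_filter z0) _ _).1 hc (e * c).
rewrite mulr_gt0 // => /(_ isT); apply: filter_app; near=> z => hz.
rewrite -normrN opprB g_sub normrM normfV ltr_pdivrMr ?(lt_le_trans c_gt0) //.
by rewrite distrC; apply: (lt_le_trans hz); rewrite ler_pM2l.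
Unshelve. all: by end_near.
Qed.

Lemma is_derive_sqrt_branch dh :
  is_derive z0 1 h dh -> is_derive z0 1 g (dh / (2 * g z0)).
Proof.
move=> hd.
have gc : {for z0, continuous g}.
  apply/sqrt_branch_continuous/differentiable_continuous/derivable1_diffP.
  exact: ex_derive.
have h_quot : (fun t : K => t^-1 *: ((h \o shift z0) (t *: 1) - h z0)) @ 0^' --> dh.
  by case: hd => h_der <-.
have g_near : (fun t : K => g (t *: 1 + z0)) @ 0^' --> g z0.
  have shift_cvg : (fun t : K => t *: 1 + z0) @ (0 : K) --> z0.
    have -> : (fun t : K => t *: 1 + z0) = (fun t => t + z0).
      by apply/funext => t; rewrite -[t *: _]/(t * 1) mulr1.
    by rewrite -[X in _ --> X]add0r; apply: cvgD cvg_id (cvg_cst _).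
  have g_shift : (fun t : K => g (t *: 1 + z0)) @ (0 : K) --> g z0.
    exact: cvg_trans (cvg_app g shift_cvg) gc.
  exact: cvg_within_filter g_shift.
have g_quot : (fun t : K => t^-1 *: ((g \o shift z0) (t *: 1) - g z0)) =
    (fun t => (t^-1 *: ((h \o shift z0) (t *: 1) - h z0)) * (g (t *: 1 + z0) + g z0)^-1).
  by apply/funext => t /=; rewrite g_sub [_ *: (_ / _)]mulrA.
have lim : (fun t : K => t^-1 *: ((g \o shift z0) (t *: 1) - g z0)) @ 0^'
    --> dh / (2 * g z0).
  rewrite g_quot mulr_natl mulr2n.
  exact: cvgM h_quot (cvgV (gD_neq0 z0) (cvgD g_near (cvg_cst _))).
by split; [exact: cvgP lim | exact: cvg_lim lim].
Qed.

End SquareRootBranch.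

Section LaurentPolynomial.
Variable K : comUnitRingType.

(* [(c, m, n)] stands for the monomial [c x^m y^n]; [laurent_deriv kx ky] is
   the derivation determined by [x' = kx / x] and [y' = ky / y]. *)

Definition laurent_eval (x y : K) (p : seq (K * int * int)) : K :=
  \sum_(t <- p) t.1.1 * (x ^ t.1.2 * y ^ t.2).

Definition laurent_deriv (kx ky : K) (p : seq (K * int * int)) :
    seq (K * int * int) :=
  flatten [seq [:: (t.1.1 * t.1.2%:~R * kx, t.1.2 - 2, t.2);
                   (t.1.1 * t.2%:~R * ky, t.1.2, t.2 - 2)] | t <- p].

Lemma laurent_eval11 p : laurent_eval 1 1 p = \sum_(t <- p) t.1.1.
Proof. by apply: eq_bigr => t _; rewrite !exp1rz !mulr1. Qed.

End LaurentPolynomial.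

Section LaurentCalculus.
Variable K : numFieldType.
Implicit Types (f X Y : K -> K) (l df kx ky : K).

Lemma is_derive_inv f l df : f l != 0 -> is_derive l 1 f df ->
  is_derive l 1 (fun z => (f z)^-1) (- (f l) ^- 2 * df).
Proof.
move=> fl_neq0 [f_der <-].
by split; [exact: derivableV | exact: deriveV].
Qed.

Lemma is_derive_exprz X l df (m : int) : X l != 0 -> is_derive l 1 X df ->
  is_derive l 1 (fun z => X z ^ m) (m%:~R * X l ^ (m - 1) * df).
Proof.
move=> Xl_neq0 dX; case: m => n.
- have := is_deriveX n dX; rewrite exprfctE => dXn.
  apply: is_derive_eq dXn _; case: n => [|n]; first by rewrite /= !mul0r scale0r.
  by rewrite -predn_int.
- have Xn_neq0 : X l ^+ n.+1 != 0 by rewrite expf_neq0.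
  have := is_deriveX n.+1 dX; rewrite exprfctE => dXn.
  have -> : (fun z => X z ^ Negz n) = (fun z => (X z ^+ n.+1)^-1) by [].
  apply: is_derive_eq (is_derive_inv (f := fun z => X z ^+ n.+1) Xn_neq0 dXn) _.
  rewrite -[_ *: df]/(_ * df) NegzE -opprD -PoszD addn1 -exprnN mulrNz /= !exprS.
  by field; rewrite Xl_neq0 expf_neq0.
Qed.

Lemma expfzB2 (x : K) (k : int) : x != 0 -> x ^ (k - 2) = x ^ (k - 1) / x.
Proof. by move=> x_neq0; rewrite -exprN1 -expfzDr // -addrA. Qed.

Lemma is_derive_laurent_eval X Y l kx ky p :
  X l != 0 -> Y l != 0 -> is_derive l 1 X (kx / X l) -> is_derive l 1 Y (ky / Y l) ->
  is_derive l 1 (fun z => laurent_eval (X z) (Y z) p)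
    (laurent_eval (X l) (Y l) (laurent_deriv kx ky p)).
Proof.
move=> X_neq0 Y_neq0 dX dY; elim: p => [|[[c m] n] p IH].
  rewrite /laurent_eval big_nil; under eq_fun do rewrite big_nil.
  exact: is_derive_cst.
rewrite /laurent_eval /laurent_deriv /= !big_cons; under eq_fun do rewrite big_cons.
have dXm := is_derive_exprz m X_neq0 dX; have dYn := is_derive_exprz n Y_neq0 dY.
apply: is_derive_eq (is_deriveD (is_deriveZ c (is_deriveM dXm dYn)) IH) _.
rewrite [RHS]addrA; congr (_ + _) => /=.
by rewrite !expfzB2 // /GRing.scale /=; ring.
Qed.

Section LaurentDerivatives.
Variables (X Y : K -> K) (kx ky : K) (U : set K).
Hypotheses (U_open : open U)
  (X_neq0 : forall l, U l -> X l != 0) (Y_neq0 : forall l, U l -> Y l != 0)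
  (X_deriv : forall l, U l -> is_derive l 1 X (kx / X l))
  (Y_deriv : forall l, U l -> is_derive l 1 Y (ky / Y l)).

Let near_U l : U l -> \forall z \near l, U z.
Proof. by move=> Ul; apply: open_nbhs_nbhs. Qed.

Lemma near_derivable_laurent_eval p l : U l ->
  \forall z \near l, derivable (fun z => laurent_eval (X z) (Y z) p) z 1.
Proof.
move=> /near_U; apply: filterS => z Uz.
by case: (is_derive_laurent_eval p (X_neq0 Uz) (Y_neq0 Uz)
  (X_deriv Uz) (Y_deriv Uz)).
Qed.

Lemma derive1n_laurent_eval p k l : U l ->
  derive1n k (fun z => laurent_eval (X z) (Y z) p) l =
  laurent_eval (X l) (Y l) (iter k (laurent_deriv kx ky) p).
Proof.
elim: k l => [//|k IH] l Ul.
rewrite derive1nS derive1E (near_eq_derive (1 : K) (filterS IH (near_U Ul))).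
by have [_ ->] := is_derive_laurent_eval (iter k (laurent_deriv kx ky) p)
  (X_neq0 Ul) (Y_neq0 Ul) (X_deriv Ul) (Y_deriv Ul).
Qed.

End LaurentDerivatives.

End LaurentCalculus.

Lemma is_derive_affine (K : numFieldType) (u v l : K) :
  is_derive l 1 (fun z => u + v * z) v.
Proof.
apply: is_derive_eq
  (is_deriveD (is_derive_cst u l 1) (is_deriveZ v (is_derive_id l 1))) _.
by rewrite add0r -[v *: _]/(v * 1) mulr1.
Qed.

Section ComplexSquareRoot.
Variable R : realType.
Local Notation C := R[i]^o.
Implicit Types (z : R[i]) (r : R).

Lemma csqrt_up_sqr z : csqrt_up z ^+ 2 = z.
Proof.
case: z => x y; rewrite /csqrt_up /=.
set m := Num.sqrt (x ^+ 2 + y ^+ 2).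
have m_sqr : m ^+ 2 = x ^+ 2 + y ^+ 2 by rewrite sqr_sqrtr // addr_ge0 ?sqr_ge0.
have /andP[Nm_le_x x_le_m] : - m <= x <= m.
  by rewrite -ler_norml -sqrtr_sqr ler_wsqrtr // lerDl sqr_ge0.
set s := Num.sqrt ((m + x) / 2); set t := Num.sqrt ((m - x) / 2).
have s_sqr : s ^+ 2 = (m + x) / 2 by rewrite sqr_sqrtr // divr_ge0 //; lra.
have t_sqr : t ^+ 2 = (m - x) / 2 by rewrite sqr_sqrtr // divr_ge0 //; lra.
have st : s * t = `|y| / 2.
  rewrite -sqrtrM; last by rewrite divr_ge0 //; lra.
  rewrite (_ : (m + x) / 2 * ((m - x) / 2) = (y / 2) ^+ 2).
    by rewrite sqrtr_sqr normf_div normr_nat.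
  by transitivity ((m ^+ 2 - x ^+ 2) / 4); [field | rewrite m_sqr; field].
apply/eqP; rewrite eq_complex /= -!expr2 t_sqr; case: ifP => y_ge0.
- rewrite s_sqr [t * s]mulrC st ger0_norm //.
  by apply/andP; split; apply/eqP; field.
- rewrite sqrrN s_sqr mulNr mulrN [t * s]mulrC st ltr0_norm ?ltNge ?y_ge0 //.
  by apply/andP; split; apply/eqP; field.
Qed.

Lemma Im_csqrt_up_ge0 z : 0 <= complex.Im (csqrt_up z).
Proof. exact: sqrtr_ge0. Qed.

Lemma Im_csqrt_up_gt0 z : complex.Re z < 0 -> 0 < complex.Im (csqrt_up z).
Proof.
case: z => x y /= x_lt0; rewrite sqrtr_gt0 divr_gt0 // subr_gt0.
exact: lt_le_trans x_lt0 (sqrtr_ge0 _).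
Qed.

Lemma normc_ge_Im z : (complex.Im z)%:C <= `|z|.
Proof.
rewrite normc_def lecR; apply: le_trans (ler_norm _) _.
by rewrite -sqrtr_sqr ler_wsqrtr // lerDr sqr_ge0.
Qed.

Lemma csqrt_up_neq0 z : complex.Re z < 0 -> csqrt_up z != 0.
Proof.
move=> /Im_csqrt_up_gt0 Im_gt0.
by rewrite -normr_gt0 (lt_le_trans _ (normc_ge_Im _)) // ltcR.
Qed.

Lemma csqrt_up_Nreal r : 0 <= r -> csqrt_up (- r%:C) = 'i * (Num.sqrt r)%:C.
Proof.
move=> r_ge0; rewrite /csqrt_up /= oppr0 lexx expr0n addr0 sqrrN sqrtr_sqr.
rewrite ger0_norm // subrr mul0r sqrtr0 opprK (_ : (r + r) / 2 = r); last by field.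
by apply/eqP; rewrite eq_complex /= !mul0r !mul1r subrr add0r !eqxx.
Qed.

Lemma is_derive_csqrt_up_affine (u v l : C) : complex.Re (u + v * l) < 0 ->
  is_derive l 1 (fun z => csqrt_up (u + v * z) : C) (v / (2 * csqrt_up (u + v * l))).
Proof.
move=> Re_lt0; set g := fun z => csqrt_up (u + v * z) : C.
have Im_gl_gt0 : 0 < complex.Im (g l) by exact: Im_csqrt_up_gt0.
apply: (@is_derive_sqrt_branch _ g _ l (complex.Im (g l))%:C).
- by rewrite ltcR.
- by move=> z; exact: csqrt_up_sqr.
- move=> z; apply: le_trans (normc_ge_Im _); rewrite lecR raddfD /= lerDr.
  exact: Im_csqrt_up_ge0.
- exact: is_derive_affine.
Qed.

End ComplexSquareRoot.

Section DLaurent.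
Variable K : comUnitRingType.
Implicit Types A B x y k : K.

Definition D_laurent A B : seq (K * int * int) :=
  [:: (A * (A + 2 * B), 0, 0); (- (A * (A + B)), 1, 0);
      (- (A * (A + B)), 0, 1); (A ^+ 2, 1, 1)].

Lemma D_laurent_eval x y A B : laurent_eval x y (D_laurent A B) =
  A * (A + 2 * B) - A * (A + B) * (x + y) + A ^+ 2 * x * y.
Proof. by rewrite /laurent_eval !big_cons big_nil /= !expr0z !expr1z; ring. Qed.

Lemma D_laurent_coef_sums A B k :
  let S n := \sum_(t <- iter n (laurent_deriv k (- k)) (D_laurent A B)) t.1.1 in
  [/\ S 0%N = 0, S 1%N = 0, S 2%N = 2 * A * (B - A) * k ^+ 2, S 3%N = 0
    & S 4%N = 6 * A * (5 * B - 3 * A) * k ^+ 4].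
Proof. by rewrite /laurent_deriv /= !big_cons big_nil /=; split; ring. Qed.

End DLaurent.

Section DfunAtZero.
Variables (R : realType) (a b : R).
Hypothesis a_gt0 : 0 < a.
Local Notation C := R[i]^o.
Local Notation om := (a ^+ 2 / 4).

Let k0 : R[i] := 'i * (a / 2)%:C.

Definition D_kappa : R[i] := - 'i / (2 * k0 ^+ 2).

Let i_neq0 : 'i != 0 :> R[i].
Proof. by apply/eqP => /eqP; rewrite eq_complex /= oner_eq0 andbF. Qed.

Let k0_neq0 : k0 != 0.
Proof. by rewrite mulf_neq0 // fmorph_eq0 mulf_neq0 ?invr_eq0 ?pnatr_eq0 ?gt_eqF. Qed.

Let two_i_k0 : 2 * 'i * k0 = - a%:C.
Proof.
rewrite /k0 mulrA -(mulrA 2) -expr2 sqr_i rmorphM /= fmorphV /= rmorph_nat.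
by field.
Qed.

Let four_k0_sqr : 4 * k0 ^+ 2 = - a%:C ^+ 2.
Proof.
rewrite /k0 exprMn sqr_i rmorphM /= fmorphV /= rmorph_nat.
by field.
Qed.

Lemma D_kappa_neq0 : D_kappa != 0.
Proof. by rewrite mulf_neq0 ?oppr_eq0 // invr_eq0 mulf_neq0 ?pnatr_eq0 ?expf_neq0. Qed.

Let csqrt_up_Nom : csqrt_up (- om%:C) = k0.
Proof.
rewrite csqrt_up_Nreal ?divr_ge0 ?sqr_ge0 // (_ : om = (a / 2) ^+ 2); last by field.
by rewrite sqrtr_sqr ger0_norm // divr_ge0 // ltW.
Qed.

Let kplus0 : kplus om 0 = k0.
Proof. by rewrite /kplus mulr0 subr0 csqrt_up_Nom. Qed.

Let kminus0 : kminus om 0 = k0.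
Proof. by rewrite /kminus mulr0 addr0 csqrt_up_Nom. Qed.

Let U : set C := ball 0 om%:C.

Let U_open : open U. Proof. exact: ball_open. Qed.

Let U_Im l : U l -> complex.Im l < om /\ - complex.Im l < om.
Proof.
rewrite /U /ball /= sub0r normrN => l_lt.
have := normc_ge_Im l; have := normc_ge_Im (- l); rewrite normrN.
by case: l l_lt => u v /= l_lt Nv_le v_le; split; rewrite -ltcR; apply: le_lt_trans l_lt.
Qed.

Let kplus_is_derive l : U l ->
  is_derive l 1 (kplus om : C -> C) (- 'i / (2 * kplus om l)).
Proof.
move=> /U_Im[Im_lt _].
have -> : kplus om = fun z => csqrt_up (- om%:C + - 'i * z).
  by apply/funext => z; rewrite mulNr.
by apply: is_derive_csqrt_up_affine; case: l Im_lt => u v /=; lra.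
Qed.

Let kminus_is_derive l : U l ->
  is_derive l 1 (kminus om : C -> C) ('i / (2 * kminus om l)).
Proof.
move=> /U_Im[_ NIm_lt].
by apply: is_derive_csqrt_up_affine; case: l NIm_lt => u v /=; lra.
Qed.

Let kplus_neq0 l : U l -> kplus om l != 0.
Proof.
by move=> /U_Im[Im_lt _]; apply: csqrt_up_neq0; case: l Im_lt => u v /=; lra.
Qed.

Let kminus_neq0 l : U l -> kminus om l != 0.
Proof.
by move=> /U_Im[_ NIm_lt]; apply: csqrt_up_neq0; case: l NIm_lt => u v /=; lra.
Qed.

Let X (l : C) : C := k0^-1 * kplus om l.
Let Y (l : C) : C := k0^-1 * kminus om l.

Let X_neq0 l : U l -> X l != 0.
Proof. by move=> Ul; rewrite mulf_neq0 ?invr_eq0 ?kplus_neq0. Qed.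

Let Y_neq0 l : U l -> Y l != 0.
Proof. by move=> Ul; rewrite mulf_neq0 ?invr_eq0 ?kminus_neq0. Qed.

Let X_deriv l : U l -> is_derive l 1 X (D_kappa / X l).
Proof.
move=> Ul; apply: is_derive_eq (is_deriveZ k0^-1 (kplus_is_derive Ul)) _.
by rewrite /X /D_kappa /GRing.scale /=; field; rewrite k0_neq0 kplus_neq0.
Qed.

Let Y_deriv l : U l -> is_derive l 1 Y (- D_kappa / Y l).
Proof.
move=> Ul; apply: is_derive_eq (is_deriveZ k0^-1 (kminus_is_derive Ul)) _.
by rewrite /Y /D_kappa /GRing.scale /=; field; rewrite k0_neq0 kminus_neq0.
Qed.

Let Dfun_laurent :
  Dfun a b = fun l => laurent_eval (X l) (Y l) (D_laurent a%:C (b / 2)%:C).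
Proof.
apply/funext => l; rewrite D_laurent_eval /Dfun /= rmorphD /=.
have -> : kplus om l = k0 * X l by rewrite /X mulVKf.
have -> : kminus om l = k0 * Y l by rewrite /Y mulVKf.
set A := a%:C; set B := (b / 2)%:C.
transitivity ((A + B) ^+ 2 - B ^+ 2 + (2 * 'i * k0) * (A + B) * (X l + Y l)
  - (4 * k0 ^+ 2) * X l * Y l); first by ring.
by rewrite two_i_k0 four_k0_sqr; ring.
Qed.

Let U0 : U 0.
Proof. by apply: ballxx; rewrite ltcR divr_gt0 ?exprn_gt0. Qed.

Lemma Dfun_derivable_near0 : \forall z \near (0 : C), derivable (Dfun a b) z 1.
Proof.
rewrite Dfun_laurent.
exact: near_derivable_laurent_eval U_open X_neq0 Y_neq0 X_deriv Y_deriv _ _ U0.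
Qed.

Lemma derive1n_Dfun0 k : derive1n k (Dfun a b) (0 : C) =
  \sum_(t <- iter k (laurent_deriv D_kappa (- D_kappa))
               (D_laurent a%:C (b / 2)%:C)) t.1.1.
Proof.
rewrite Dfun_laurent (derive1n_laurent_eval U_open X_neq0 Y_neq0 X_deriv Y_deriv _ _ U0).
by rewrite /X /Y kplus0 kminus0 mulVf // laurent_eval11.
Qed.

End DfunAtZero.

Theorem lemmaA2 (R : realType) (a b C a' : R) :
  0 < a -> 0 < C -> b = 2%:R * a' * C ^+ 2 ->
  (a' = a / C ^+ 2 -> zero_of_multiplicity (Dfun a b) 0 4) /\
  (a' != a / C ^+ 2 -> zero_of_multiplicity (Dfun a b) 0 2).
Proof.
move=> a_gt0 C_gt0 b_def.
set A : R[i] := a%:C; set B : R[i] := (b / 2)%:C.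
have [S0 S1 S2 S3 S4] := D_laurent_coef_sums A B (D_kappa a).
rewrite -!(derive1n_Dfun0 b a_gt0) in S0 S1 S2 S3 S4.
have A_neq0 : A != 0 by rewrite fmorph_eq0 gt_eqF.
have kappa_neq0 := D_kappa_neq0 a_gt0.
have C_neq0 : C != 0 by rewrite gt_eqF.
have B_eq_A : B = A <-> a' = a / C ^+ 2.
  split=> [/complexI|] BA; last by rewrite /B /A b_def BA; congr _%:C; field.
  by rewrite -BA b_def; field.
have near_derivable := Dfun_derivable_near0 b a_gt0.
split=> [/B_eq_A BA | /(contra_neq B_eq_A.1) BA]; split=> //; split.
- case=> [|[|[|[|k]]]] lt_k4; [exact: S0 | exact: S1 | | exact: S3 |].
  + by rewrite S2 BA subrr mulr0 mul0r.
  + by exfalso; rewrite !ltnS ltn0 in lt_k4.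
- rewrite S4 BA (_ : 5 * A - 3 * A = 2 * A); last by ring.
  by rewrite mulf_neq0 ?expf_neq0 // !mulf_neq0 ?pnatr_eq0.
- case=> [|[|k]] lt_k2; [exact: S0 | exact: S1 |].
  by exfalso; rewrite !ltnS ltn0 in lt_k2.
- by rewrite S2 mulf_neq0 ?expf_neq0 // !mulf_neq0 ?pnatr_eq0 // subr_eq0.
Qed.
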